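(* Let $D$ be an $n\times n$ distance matrix. If $D(\phi_1,\mathbf X)\ne D$ for some satisfying assignment $\mathbf X$ of $\phi_1$, then there is no graph realisation $(G=(V,E),\Phi)$ of $D$ with $|V|=n+1$.
   Context: $[n]=\{1,\dots,n\}$. An $n\times n$ matrix $D$ with non-negative integer entries is a distance matrix if (i) $D_{ii}=0$ for all $i$ and $D_{ij}>0$ for all $i\ne j$; (ii) $D$ is symmetric; (iii) $D_{iw}+D_{wj}\ge D_{ij}$ for all $i,j,w\in[n]$. A graph realisation of $D$ is a pair $(G,\Phi)$, where $G=(V,E)$ is a finite simple undirected unweighted graph and $\Phi:[n]\to V$ is an injective map such that $d_G(\Phi(i),\Phi(j))=D_{ij}$ for all $i,j\in[n]$; here $d_G$ denotes the shortest-path distance in $G$ (equal to $\infty$ if no path exists). The associated graph $G_D=(V_D,E_D)$ of $D$ is the simple unweighted graph with $V_D=\{v_1,\dots,v_n\}$ and $\{v_i,v_j\}\in E_D$ if and only if $D_{ij}=1$; $d_{G_D}$ is its shortest-path distance. The 2-CNF formula $\phi_1$ over variables $x_1,\dots,x_n$ is the conjunction of: the clause $(\neg x_i\vee\neg x_j)$ for every pair $i,j\in[n]$ with $D_{ij}>2$; and the clauses $(x_i)$ and $(x_j)$ for every pair $i,j\in[n]$ with $D_{ij}=2$ and $d_{G_D}(v_i,v_j)>2$. For a satisfying assignment $\mathbf X$, $G_{\phi_1,\mathbf X}$ is the simple graph on $\{v_1,\dots,v_{n+1}\}$ whose induced subgraph on $\{v_1,\dots,v_n\}$ is $G_D$ and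 in which $v_{n+1}$ is adjacent to $v_i$ ($i\in[n]$) exactly when $x_i$ is true in $\mathbf X$; $D(\phi_1,\mathbf X)$ is the $n\times n$ matrix of shortest-path distances in $G_{\phi_1,\mathbf X}$ between $v_i$ and $v_j$, $i,j\in[n]$. *)

From mathcomp Require Import all_boot.
From mathcomp Require Import boolp.
Set Implicit Arguments. Unset Strict Implicit. Unset Printing Implicit Defensive.

(* [D] is an n x n matrix of natural numbers, indexed by 'I_n (= [n] shifted to 0..n-1). *)
Definition is_distance_matrix (n : nat) (D : 'I_n -> 'I_n -> nat) : Prop :=
  [/\ (forall i, D i i = 0),
      (forall i j, i != j -> 0 < D i j),
      (forall i j, D i j = D j i) &
      (forall i j w, D i j <= D i w + D w j)].

Definition simple_graph (V : finType) (e : rel V) : Prop :=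
  symmetric e /\ irreflexive e.

Fixpoint walkn (V : finType) (e : rel V) (k : nat) (u v : V) : bool :=
  if k is k'.+1 then [exists w, e u w && walkn e k' w v] else u == v.

(* Shortest-path distance: Some d with d the least walk length, None (= infinity)
   if no path exists. *)
Definition gdist (V : finType) (e : rel V) (u v : V) : option nat :=
  match pselect (exists k, walkn e k u v) with
  | left H => Some (ex_minn H)
  | right _ => None
  end.

Definition realisation (n : nat) (D : 'I_n -> 'I_n -> nat)
  (V : finType) (e : rel V) (Phi : 'I_n -> V) : Prop :=
  simple_graph e /\ injective Phi /\
  forall i j, gdist e (Phi i) (Phi j) = Some (D i j).

Definition GD (n : nat) (D : 'I_n -> 'I_n -> nat) : rel 'I_n :=
  fun i j => D i j == 1.

Definition ext_gt2 (d : option nat) : bool :=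
  if d is Some k then 2 < k else true.

Definition phi1_sat (n : nat) (D : 'I_n -> 'I_n -> nat) (X : 'I_n -> bool) : Prop :=
  (forall i j, 2 < D i j -> ~~ X i || ~~ X j) /\
  (forall i j, D i j = 2 -> ext_gt2 (gdist (GD D) i j) -> X i && X j).

(* G_{phi_1, X}: vertices Some i = v_i (i in [n]), None = v_{n+1} *)
Definition GX (n : nat) (D : 'I_n -> 'I_n -> nat) (X : 'I_n -> bool) : rel (option 'I_n) :=
  fun a b => match a, b with
             | Some i, Some j => GD D i j
             | Some i, None => X i
             | None, Some j => X j
             | None, None => false
             end.

Definition DX (n : nat) (D : 'I_n -> 'I_n -> nat) (X : 'I_n -> bool) :
  'I_n -> 'I_n -> option nat :=
  fun i j => gdist (GX D X) (Some i) (Some j).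

From mathcomp Require Import all_boot.
From mathcomp Require Import boolp zify.
Set Implicit Arguments. Unset Strict Implicit. Unset Printing Implicit Defensive.

(* A walk in G_{phi_1,X} between original vertices is never shorter than the
   D-distance of its ends: edges of G_D have D-length 1, and a detour
   v_a - v_{n+1} - v_b through the new vertex joins two true variables, whose
   D-distance is at most 2 by the clauses (~ x_a \/ ~ x_b).  Conversely, in a
   realisation on n+1 vertices at most one vertex lies outside the image of Phi
   and it has no loop, so every geodesic decomposes into steps of D-length 1
   or 2.  A step of length 2 is either a path of length 2 in G_D or, when
   d_{G_D} > 2, forced through v_{n+1} by the unit clauses of phi_1. *)

Section Walks.

Variables (V : finType) (e : rel V).

Lemma walkn_cat k1 k2 x y z :
  walkn e k1 x y -> walkn e k2 y z -> walkn e (k1 + k2) x z.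
Proof.
elim: k1 x => [|k1 IH] x /=; first by move/eqP->.
case/existsP=> w /andP[exw wy] yz; apply/existsP; exists w.
by rewrite exw; exact: IH.
Qed.

Lemma walkn_potential (p : V -> nat) t :
  p t = 0 -> (forall u w, e u w -> p u <= (p w).+1) ->
  forall k u, walkn e k u t -> p u <= k.
Proof.
move=> pt0 p_lip; elim=> [|k IH] u /=; first by move/eqP->; rewrite pt0.
case/existsP=> w /andP[euw wt]; apply: leq_trans (p_lip _ _ euw) _.
exact: IH.
Qed.

Lemma gdist_Some_walkn x y m : gdist e x y = Some m -> walkn e m x y.
Proof. by rewrite /gdist; case: pselect => // H [<-]; case: ex_minnP. Qed.

Lemma gdist_Some_min x y m k :
  gdist e x y = Some m -> walkn e k x y -> m <= k.
Proof.
rewrite /gdist; case: pselect => // H [<-].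
by case: ex_minnP => m0 _ m0_min /m0_min.
Qed.

Lemma gdist_eq_Some x y m :
  walkn e m x y -> (forall k, walkn e k x y -> m <= k) -> gdist e x y = Some m.
Proof.
move=> xy_m m_min; rewrite /gdist; case: pselect => [H|[]]; last by exists m.
congr Some; case: ex_minnP => m0 xy_m0 m0_min.
by apply/eqP; rewrite eqn_leq m0_min // m_min.
Qed.

End Walks.

Lemma walkn_hom (U V : finType) (e : rel U) (e' : rel V) (f : U -> V) k x y :
  (forall u w, e u w -> e' (f u) (f w)) -> walkn e k x y -> walkn e' k (f x) (f y).
Proof.
move=> f_hom; elim: k x => [|k IH] x /=; first by move/eqP->.
case/existsP=> w /andP[exw wy]; apply/existsP; exists (f w).
by rewrite f_hom //; exact: IH.
Qed.

Lemma notin_codom_eq (T V : finType) (f : T -> V) x y :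
  injective f -> #|V| = #|T|.+1 ->
  x \notin codom f -> y \notin codom f -> x = y.
Proof.
move=> f_inj cardV xf yf.
have : #|[predC [in codom f]]| <= 1.
  by move: (cardC [in codom f]); rewrite (card_codom f_inj) cardV -addn1 => /addnI ->.
by move/card_le1_eqP/(_ y x); apply; rewrite inE.
Qed.

Definition short_geodesic_steps n (D : 'I_n -> 'I_n -> nat) : Prop :=
  forall i j, 0 < D i j ->
  exists b, [/\ 0 < D i b, D i b <= 2 & D i b + D b j <= D i j].

Section Realisation.

Variables (n : nat) (D : 'I_n -> 'I_n -> nat) (V : finType) (e : rel V) (Phi : 'I_n -> V).
Hypothesis DPhi : realisation D e Phi.

Lemma realisation_walkn_ge k i j : walkn e k (Phi i) (Phi j) -> D i j <= k.
Proof. by case: DPhi => _ [_ dist]; exact: gdist_Some_min. Qed.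

Lemma realisation_geodesic i j : walkn e (D i j) (Phi i) (Phi j).
Proof. by case: DPhi => _ [_ dist]; exact: gdist_Some_walkn. Qed.

Lemma realisation_triangle i j b : D i j <= D i b + D b j.
Proof. exact/realisation_walkn_ge/walkn_cat/realisation_geodesic/realisation_geodesic. Qed.

Lemma realisation_short_geodesic_steps :
  #|V| = n.+1 -> short_geodesic_steps D.
Proof.
case: DPhi => [[_ e_irr] [Phi_inj _]] cardV i j.
have e_neq x y : e x y -> x != y by apply: contraTneq => ->; rewrite e_irr.
have := realisation_geodesic i j; have := realisation_triangle i j.
case: (D i j) => [|d] //= D_tri /existsP[w /andP[e_iw wj]] _.
have [/codomP[b Ew]|wPhi] := boolP (w \in codom Phi).
  subst w; have D_bj := realisation_walkn_ge wj.
  have D_ib : D i b <= 1.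
    by apply: realisation_walkn_ge; apply/existsP; exists (Phi b); rewrite e_iw /=.
  by exists b; have := D_tri b; split; lia.
case: d D_tri wj => [_ /eqP wPhij|d D_tri /existsP[w2 /andP[e_ww2 w2j]]].
  by move: wPhi; rewrite wPhij codom_f.
have [/codomP[b Ew2]|w2Phi] := boolP (w2 \in codom Phi); last first.
  by move: (e_neq _ _ e_ww2); rewrite (notin_codom_eq Phi_inj _ wPhi w2Phi) ?card_ord ?eqxx.
subst w2; have D_bj := realisation_walkn_ge w2j.
have D_ib : D i b <= 2.
  apply: realisation_walkn_ge; apply/existsP; exists w; rewrite e_iw /=.
  by apply/existsP; exists (Phi b); rewrite e_ww2 /=.
by exists b; have := D_tri b; split; lia.
Qed.

End Realisation.

Section SatisfyingAssignment.

Variables (n : nat) (D : 'I_n -> 'I_n -> nat) (X : 'I_n -> bool).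
Hypotheses (D_metric : is_distance_matrix D) (X_sat : phi1_sat D X).

Lemma phi1_sat_true_le2 a b : X a -> X b -> D a b <= 2.
Proof.
case: X_sat => D_gt2 _ Xa Xb; rewrite leqNgt; apply/negP => /D_gt2.
by rewrite Xa Xb.
Qed.

Lemma GX_walkn_ge k i j : walkn (GX D X) k (Some i) (Some j) -> D i j <= k.
Proof.
have [D0 _ _ D_tri] := D_metric.
(* v_{n+1} gets potential max_{X a} D a j - 1, which lies within 1 of every D b j with X b. *)
pose p u := if u is Some i then D i j else (\max_(a | X a) D a j).-1.
apply: (walkn_potential (p := p)) => [|[u|] [w|] //=]; rewrite /p; first exact: D0.
- by move=> /eqP D_uw; have := D_tri u j w; lia.
- by move=> Xu; apply: leq_trans (leqSpred _); exact: leq_bigmax_cond.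
- move=> Xw; rewrite -subn1 leq_subLR add1n; apply/bigmax_leqP => a Xa.
  by have := D_tri a j w; have := phi1_sat_true_le2 Xa Xw; lia.
Qed.

Lemma GX_walkn_short i b :
  D i b <= 2 -> exists2 k, k <= D i b & walkn (GX D X) k (Some i) (Some b).
Proof.
have [_ D_pos _ _] := D_metric; have [_ D2_far] := X_sat.
have [-> _|i_b] := eqVneq i b; first by exists 0 => //=.
have := D_pos _ _ i_b; case E: (D i b) => [|[|[|]]] // _ _.
  by exists 1 => //=; apply/existsP; exists (Some b); rewrite /GX /GD E /=.
have via_new : X i && X b -> walkn (GX D X) 2 (Some i) (Some b).
  case/andP => Xi Xb /=; apply/existsP; exists None; rewrite Xi /=.
  by apply/existsP; exists (Some b); rewrite Xb /=.
case Eg: (gdist (GD D) i b) => [m|]; last first.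
  by exists 2 => //; apply/via_new/D2_far; rewrite ?Eg.
have [m_le2|m_gt2] := leqP m 2; last first.
  by exists 2 => //; apply/via_new/D2_far; rewrite ?Eg.
exists m => //; apply: (walkn_hom (e := GD D) (f := Some)) => //.
exact: gdist_Some_walkn Eg.
Qed.

Lemma GX_walkn_le i j :
  short_geodesic_steps D -> exists2 k, k <= D i j & walkn (GX D X) k (Some i) (Some j).
Proof.
move=> steps; elim/ltn_ind: {i}(D i j) {-2}i (erefl (D i j)) => d IH i Dij.
have [Dij0|/steps[b [Dib_pos Dib_le2 Dibj]]] := posnP (D i j).
  have [_ D_pos _ _] := D_metric.
  by have [->|/D_pos] := eqVneq i j; [exists 0 => //= | rewrite Dij0].
have [k1 k1_le ib] := GX_walkn_short Dib_le2.
have [k2 k2_le bj] := IH (D b j) ltac:(lia) b erefl.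
by exists (k1 + k2); [lia | exact: walkn_cat ib bj].
Qed.

Lemma DX_eq_D : short_geodesic_steps D -> DX D X = fun i j => Some (D i j).
Proof.
move=> steps; apply: funext => i; apply: funext => j.
have [k k_le ij] := GX_walkn_le i j steps.
have k_ge := GX_walkn_ge ij; apply: gdist_eq_Some => [|k' /GX_walkn_ge //].
by have -> : D i j = k by lia.
Qed.

End SatisfyingAssignment.

Theorem mainTheorem14 (n : nat) (D : 'I_n -> 'I_n -> nat) :
  is_distance_matrix D ->
  (exists X : 'I_n -> bool, phi1_sat D X /\ DX D X <> (fun i j => Some (D i j))) ->
  forall (V : finType) (e : rel V) (Phi : 'I_n -> V),
    #|V| = n.+1 -> ~ realisation D e Phi.
Proof.
move=> D_metric [X [X_sat DX_neq]] V e Phi cardV DPhi.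
apply: DX_neq; apply: DX_eq_D => //.
exact: realisation_short_geodesic_steps DPhi cardV.
Qed.
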